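(* In the setting described in the context, there exists a collection $\Gamma=\{\gamma_{xy}:(x,y)\in\Omega_{worm}\times\Omega_0\}$, where each $\gamma_{xy}$ is a path from $x$ to $y$ through states of $\Omega_{worm}$ in which consecutive states differ in exactly one edge of $E_C$ (i.e. each step is a move of the chain $P$), such that $$\varrho(\Omega_0;\Gamma)\le m^5|E_C|.$$
   Context: Let $\beta>1$. Let $G=(V,E)$ be a finite connected simple 4-regular graph with, at each vertex, its four incident edges labelled bijectively $x_1,\dots,x_4$. Each edge has two half-edges. Pairing at each vertex slot $x_1$ with $x_4$ and $x_2$ with $x_3$, and following edges by entering a vertex through one slot of a pair and leaving through the other, partitions $E$ into closed trails (circuits) $C_1,\dots,C_m$, each with a fixed reference half-edge $h_i$. Consider maps $\sigma$ from half-edges to $\{0,1\}$ with opposite values on the two half-edges of each edge and nonzero weight for the vertex function $f^*$ with $f^*(0011)=f^*(1100)=\beta$, $f^*(0101)=f^*(1010)=1$, $f^*=0$ otherwise (evaluated at $v$ on its half-edges in slot order $x_1,\dots,x_4$); values alternate along circuits and $\sigma(C_i):=\sigma(h_i)$. A vertex where $\{x_1,x_4\}$ lies on $C_i$ and $\{x_2,x_3\}$ on $C_j$, $i\ne j$, is an agree-vertex if its weight is $\beta$ exactly when $\sigma(C_i)=\sigma(C_j)$ (else $1$), and a disagree-vertex if its weight is $\beta$ exactly when $\sigma(C_i)\ne\sigma(C_j)$; $A(i,j),D(i,j)$ count these. $G_C=(\mathcal{C},E_C)$, $\mathcal{C}=\{C_1,\dots,C_m\}$, has edge $\{C_i,C_j\}$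 iff $i\ne j$ and they share such a vertex. Assume the system $X_u\oplus X_v=\mathbf{I}(A(u,v)<D(u,v))$, $\{u,v\}\in E_C$, has a solution over $\mathrm{GF}(2)$; for each $i$ with $X_i=1$ replace $h_i$ by an adjacent half-edge of $C_i$, recompute $A,D$, and set $\beta_e=\beta^{A(u,v)-D(u,v)}$, $x_e=(\beta_e-1)/(\beta_e+1)$ for $e=\{u,v\}\in E_C$. Worm process. $\Omega_k$ is the set of $S\subseteq E_C$ with exactly $k$ odd-degree vertices in $(\mathcal{C},S)$; $\partial S$ is that set of odd-degree vertices; $\Omega_{worm}=\Omega_0\cup\Omega_2$. $w(S)=\prod_{e\in S}x_e$, $Z_k=\sum_{S\in\Omega_k}w(S)$, $\xi(S)=m$ on $\Omega_0$, $2$ on $\Omega_2$, $0$ otherwise, $\pi_{worm}(S)=\xi(S)w(S)/(mZ_0+2Z_2)$. $d(u)$ is the degree of $u$ in $G_C$. The transition matrix $P$ on $\Omega_{worm}$: for $A\in\Omega_{worm}$ and $\{u,v\}\in E_C$, writing $A\oplus uv$ for the symmetric difference of $A$ with $\{\{u,v\}\}$: $P(A,A\oplus uv)=x_{uv}^{\mathbf{I}(uv\notin A)}\frac{1}{2m}\big(\frac{1}{d(u)}+\frac1{d(v)}\big)$ if $A\in\Omega_0$; $=x_{uv}^{\mathbf{I}(uv\notin A)}\frac14\big(\frac1{d(u)}+\frac1{d(v)}\big)$ if $A\oplus uv\in\Omega_0$; $=\min\!\big(1,\frac{d(u)}{d(v)}x_{uv}^{\mathbf{I}(uv\notin A)-\mathbf{I}(uv\in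 A)}\big)\frac1{4d(u)}$ if $A,A\oplus uv\in\Omega_2$ and $u\in\partial A$; all other off-diagonal entries are $0$ and each diagonal entry is $1$ minus the other entries of its row. Congestion. For $\Psi\subseteq\Omega_{worm}$ and a collection $\Gamma$ of paths $\gamma_{xy}$, $(x,y)\in\Omega_{worm}\times\Psi$, with $L(\Gamma)$ the length of the longest path, $$\varrho(\Psi;\Gamma)=\max_{(z,z')\,:\,P(z,z')>0}\frac{L(\Gamma)}{\pi_{worm}(\Psi)\pi_{worm}(z)P(z,z')}\sum_{(x,y)\in\Omega_{worm}\times\Psi,\ \gamma_{xy}\ni(z,z')}\pi_{worm}(x)\pi_{worm}(y).$$ *)

From HB Require Import structures.
From mathcomp Require Import all_boot all_order all_algebra.
Set Implicit Arguments. Unset Strict Implicit. Unset Printing Implicit Defensive.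
Import Order.TTheory GRing.Theory Num.Theory.
Local Open Scope ring_scope.

(* Half-edges: a half-edge is a (vertex, slot) pair; slot i : 'I_4 stands *)
(* for x_{i+1}.  The edges are given by a fixed-point-free involution     *)
(* [opp] pairing the two half-edges of each edge.                         *)
Definition hedge (V : finType) := (V * 'I_4)%type.

Definition slot1 : 'I_4 := @Ordinal 4 0 isT.
Definition slot2 : 'I_4 := @Ordinal 4 1 isT.
Definition slot3 : 'I_4 := @Ordinal 4 2 isT.
Definition slot4 : 'I_4 := @Ordinal 4 3 isT.

Definition partner (V : finType) (h : hedge V) : hedge V := (h.1, rev_ord h.2).

Definition no_loops (V : finType) (opp : hedge V -> hedge V) :=
  forall h, (opp h).1 != h.1.
Definition simple_graph (V : finType) (opp : hedge V -> hedge V) :=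
  forall h h' : hedge V, h.1 = h'.1 -> (opp h).1 = (opp h').1 -> h = h'.
Definition adjV (V : finType) (opp : hedge V -> hedge V) : rel V :=
  fun a b => [exists i : 'I_4, (opp (a, i)).1 == b].
Definition connected_graph (V : finType) (opp : hedge V -> hedge V) :=
  forall u v : V, connect (adjV opp) u v.

Definition hrel (V : finType) (opp : hedge V -> hedge V) : rel (hedge V) :=
  fun h h' => (h' == opp h) || (h' == partner h).

Definition circ (V : finType) (opp : hedge V -> hedge V) (h : hedge V)
  : {set hedge V} := [set h' | connect (hrel opp) h h'].

Definition Circ (V : finType) (opp : hedge V -> hedge V) : {set {set hedge V}} :=
  [set circ opp h | h : hedge V].

Definition fstar (R : ringType) (beta : R) (a b c d : bool) : R :=
  if ([:: a; b; c; d] == [:: false; false; true; true])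
     || ([:: a; b; c; d] == [:: true; true; false; false]) then beta
  else if ([:: a; b; c; d] == [:: false; true; false; true])
     || ([:: a; b; c; d] == [:: true; false; true; false]) then 1
  else 0.

Definition vweight (R : ringType) (beta : R) (V : finType)
  (sigma : {ffun hedge V -> bool}) (v : V) : R :=
  fstar beta (sigma (v, slot1)) (sigma (v, slot2)) (sigma (v, slot3))
    (sigma (v, slot4)).

Definition valid_sigma (R : ringType) (beta : R) (V : finType)
  (opp : hedge V -> hedge V) (sigma : {ffun hedge V -> bool}) : bool :=
  [forall h, sigma (opp h) == ~~ sigma h] && [forall v, vweight beta sigma v != 0].

Definition crossing (V : finType) (v : V) (C C' : {set hedge V}) : bool :=
  [&& C != C', (v, slot1) \in C, (v, slot4) \in C, (v, slot2) \in C'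
     & (v, slot3) \in C'].

(* sigma(C) := sigma(ref C), ref C being the reference half-edge of C. *)
Definition agree (R : ringType) (beta : R) (V : finType)
  (opp : hedge V -> hedge V) (ref : {set hedge V} -> hedge V)
  (v : V) (C C' : {set hedge V}) : bool :=
  crossing v C C' &&
  [forall sigma : {ffun hedge V -> bool}, valid_sigma beta opp sigma ==>
     ((vweight beta sigma v == beta) == (sigma (ref C) == sigma (ref C')))].

Definition disagree (R : ringType) (beta : R) (V : finType)
  (opp : hedge V -> hedge V) (ref : {set hedge V} -> hedge V)
  (v : V) (C C' : {set hedge V}) : bool :=
  crossing v C C' &&
  [forall sigma : {ffun hedge V -> bool}, valid_sigma beta opp sigma ==>
     ((vweight beta sigma v == beta) == (sigma (ref C) != sigma (ref C')))].

Definition Acnt (R : ringType) (beta : R) (V : finType)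
  (opp : hedge V -> hedge V) (ref : {set hedge V} -> hedge V)
  (e : {set {set hedge V}}) : nat :=
  #|[set v : V | [exists C in e, exists C' in e, agree beta opp ref v C C']]|.

Definition Dcnt (R : ringType) (beta : R) (V : finType)
  (opp : hedge V -> hedge V) (ref : {set hedge V} -> hedge V)
  (e : {set {set hedge V}}) : nat :=
  #|[set v : V | [exists C in e, exists C' in e, disagree beta opp ref v C C']]|.

Definition EC (V : finType) (opp : hedge V -> hedge V) : {set {set {set hedge V}}} :=
  [set e : {set {set hedge V}} |
     [exists C in Circ opp, exists C' in Circ opp,
        [exists v : V, crossing v C C'] && (e == [set C; C'])]].

Definition xweight (R : unitRingType) (beta : R) (V : finType)
  (opp : hedge V -> hedge V) (ref : {set hedge V} -> hedge V)
  (e : {set {set hedge V}}) : R :=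
  let be := beta ^ ((Acnt beta opp ref e)%:Z - (Dcnt beta opp ref e)%:Z) in
  (be - 1) / (be + 1).

(* States are sets S of edges; an edge is a 2-element set of vertices.     *)

Section Worm.
Variables (R : realFieldType) (T : finType) (Vx : {set T}) (E : {set {set T}})
  (x : {set T} -> R).

Definition degE (u : T) : nat := #|[set e in E | u \in e]|.
Definition degS (S : {set {set T}}) (u : T) : nat := #|[set e in S | u \in e]|.
Definition bdry (S : {set {set T}}) : {set T} := [set u in Vx | odd (degS S u)].
Definition Omega (k : nat) : {set {set {set T}}} :=
  [set S : {set {set T}} | (S \subset E) && (#|bdry S| == k)].
Definition Oworm : {set {set {set T}}} := Omega 0 :|: Omega 2.

Definition wt (S : {set {set T}}) : R := \prod_(e in S) x e.
Definition Zk (k : nat) : R := \sum_(S in Omega k) wt S.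
Definition xi (S : {set {set T}}) : R :=
  if S \in Omega 0 then #|Vx|%:R else if S \in Omega 2 then 2 else 0.
Definition piw (S : {set {set T}}) : R :=
  xi S * wt S / (#|Vx|%:R * Zk 0 + 2 * Zk 2).
Definition piset (Psi : {set {set {set T}}}) : R := \sum_(S in Psi) piw S.

Definition toggle (S : {set {set T}}) (e : {set T}) : {set {set T}} :=
  if e \in S then S :\ e else e |: S.
Definition xpow (S : {set {set T}}) (e : {set T}) : R :=
  if e \in S then 1 else x e.
Definition xratio (S : {set {set T}}) (e : {set T}) : R :=
  if e \in S then (x e)^-1 else x e.

Definition Pedge (S : {set {set T}}) (e : {set T}) : R :=
  if S \in Omega 0 then
    xpow S e * (2 * #|Vx|%:R)^-1 * \sum_(u in e) ((degE u)%:R)^-1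
  else if toggle S e \in Omega 0 then
    xpow S e / 4 * \sum_(u in e) ((degE u)%:R)^-1
  else if (S \in Omega 2) && (toggle S e \in Omega 2) then
    \sum_(u in e | u \in bdry S) \sum_(v in e :\ u)
       Num.min 1 ((degE u)%:R / (degE v)%:R * xratio S e) / (4 * (degE u)%:R)
  else 0.

Definition Poff (S S' : {set {set T}}) : R :=
  \sum_(e in E | S' == toggle S e) Pedge S e.

Definition Pm (S S' : {set {set T}}) : R :=
  if S == S' then 1 - \sum_(S'' in Oworm | S'' != S) Poff S S''
  else Poff S S'.

(* Paths: gamma_{xy} is represented by the list p of states after x, so  *)
(* the path is x :: p; each step changes exactly one edge of E, all       *)
(* states lie in Omega_worm, and it ends at y.  Its length is size p.     *)
Definition wstep (a b : {set {set T}}) : bool := [exists e in E, b == toggle a e].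
Definition good_path (s : {set {set T}}) (p : seq {set {set T}})
  (t : {set {set T}}) : bool :=
  [&& path wstep s p, all (fun a => a \in Oworm) p & last s p == t].

Definition paths_ok (Psi : {set {set {set T}}})
  (Gam : {set {set T}} -> {set {set T}} -> seq {set {set T}}) : Prop :=
  forall s t, s \in Oworm -> t \in Psi -> good_path s (Gam s t) t.

Definition Lmax (Psi : {set {set {set T}}})
  (Gam : {set {set T}} -> {set {set T}} -> seq {set {set T}}) : nat :=
  \max_(s in Oworm) \max_(t in Psi) size (Gam s t).

Definition uses (Gam : {set {set T}} -> {set {set T}} -> seq {set {set T}})
  (s t z z' : {set {set T}}) : bool :=
  (z, z') \in zip (s :: Gam s t) (Gam s t).

(* varrho(Psi; Gam) <= b, i.e. for every (z,z') with P(z,z') > 0:         *)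
(*  L * sum_{gamma_st ∋ (z,z')} pi(s) pi(t) <= b * pi(Psi) pi(z) P(z,z')   *)
(* (the ratio form with a possibly zero denominator read as +oo).          *)
Definition congestion_le (Psi : {set {set {set T}}})
  (Gam : {set {set T}} -> {set {set T}} -> seq {set {set T}}) (b : R) : Prop :=
  forall z z', z \in Oworm -> z' \in Oworm -> 0 < Pm z z' ->
    (Lmax Psi Gam)%:R *
      (\sum_(s in Oworm) \sum_(t in Psi | uses Gam s t z z') piw s * piw t)
    <= b * (piset Psi * piw z * Pm z z').

End Worm.

(* Moving the reference half-edge of every circuit with X_C = 1 swaps A(u,v)
   and D(u,v) exactly on the edges where A(u,v) < D(u,v), so afterwards
   A >= D, beta_e >= 1 and every x_e lies in [0,1].
   For such weights, route (s,t) by flipping the edges of s (+) t one at a time,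
   always choosing an edge that meets the current boundary: the boundary then
   keeps 0 or 2 vertices and the path stays in Omega_worm.  The pairs whose path
   uses a transition z -> z (+) e are recovered from s (+) t (the position of e
   in the flipping order fixes the step), so (s,t) |-> (z u e) (+) s (+) t is
   injective on them, with w(s) w(t) = w(z u e) w((z u e) (+) s (+) t).  The
   images have their boundary in a family of at most 1 + m^2 sets, and each
   boundary class weighs at most Z_0 by Griffiths' inequality Z_W <= Z_0.  With
   xi(z) P(z, z (+) e) >= x_e^{I(e \notin z)} / (2(m-1)) and path length at
   most |E_C| this gives varrho <= |E_C| m (1 + m^2) 2(m-1) <= m^5 |E_C|. *)

From HB Require Import structures.
From mathcomp Require Import all_boot all_order all_algebra.
From mathcomp Require Import zify ring lra.
Set Implicit Arguments. Unset Strict Implicit. Unset Printing Implicit Defensive.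
Import Order.TTheory GRing.Theory Num.Theory.

Section SymmetricDifference.
Variable T : finType.
Implicit Types A B C : {set T}.

Definition symd A B := (A :\: B) :|: (B :\: A).

Lemma in_symd A B y : (y \in symd A B) = (y \in A) (+) (y \in B).
Proof. by rewrite !inE; case: (y \in A); case: (y \in B). Qed.

Lemma symdC A B : symd A B = symd B A.
Proof. by apply/setP=> y; rewrite !in_symd addbC. Qed.

Lemma symdA A B C : symd A (symd B C) = symd (symd A B) C.
Proof. by apply/setP=> y; rewrite !in_symd addbA. Qed.

Lemma symd0 A : symd A set0 = A.
Proof. by apply/setP=> y; rewrite in_symd inE addbF. Qed.

Lemma symdK A B : symd (symd A B) B = A.
Proof. by apply/setP=> y; rewrite !in_symd -addbA addbb addbF. Qed.

Lemma symdKl A B : symd A (symd A B) = B.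
Proof. by apply/setP=> y; rewrite !in_symd addbA addbb. Qed.

Lemma cards_symd A B : #|symd A B| + 2 * #|A :&: B| = #|A| + #|B|.
Proof.
have disjD : (A :\: B) :&: (B :\: A) = set0.
  by apply/setP=> y; rewrite !inE; case: (y \in A); case: (y \in B).
have := cardsUI (A :\: B) (B :\: A); rewrite disjD cards0 addn0 -/(symd A B).
have := cardsID B A; have := cardsID A B; rewrite setIC; lia.
Qed.

Lemma symd_sub A B C : A \subset C -> B \subset C -> symd A B \subset C.
Proof.
by move=> sAC sBC; rewrite subUset !(subset_trans (subsetDl _ _)).
Qed.

End SymmetricDifference.

Lemma toggleE (T : finType) (S : {set {set T}}) e : toggle S e = symd S [set e].
Proof.
apply/setP=> y; rewrite /toggle in_symd; case: ifP => eS; rewrite !inE;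
  by case: eqP => [->|]; rewrite ?eS ?addbT ?addbF ?andbT ?orbF.
Qed.

Lemma toggle_inj (T : finType) (S : {set {set T}}) : injective (toggle S).
Proof.
move=> e f; rewrite !toggleE => /(congr1 (symd S)); rewrite !symdKl => /setP/(_ e).
by rewrite !inE eqxx => /esym/eqP.
Qed.

Section Boundary.
Variables (T : finType) (Vx : {set T}).
Implicit Types (S : {set {set T}}) (e : {set T}).

Lemma odd_degS_symd S S' u :
  odd (degS (symd S S') u) = odd (degS S u) (+) odd (degS S' u).
Proof.
rewrite /degS; have -> : [set e in symd S S' | u \in e] =
    symd [set e in S | u \in e] [set e in S' | u \in e].
  by apply/setP=> e; rewrite inE !in_symd !inE; case: (u \in e); rewrite ?andbT ?andbF.
have := congr1 odd (cards_symd [set e in S | u \in e] [set e in S' | u \in e]).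
by rewrite !oddD addKb addbF => ->.
Qed.

Lemma bdry_symd S S' : bdry Vx (symd S S') = symd (bdry Vx S) (bdry Vx S').
Proof. by apply/setP=> u; rewrite in_symd !inE odd_degS_symd; case: (u \in Vx). Qed.

Lemma degS_set1 e u : degS [set e] u = (u \in e).
Proof.
rewrite /degS; case: (boolP (u \in e)) => ue.
  rewrite (_ : [set _ in _ | _] = [set e]) ?cards1 //.
  by apply/setP=> f; rewrite !inE andb_idr // => /eqP->.
rewrite (_ : [set _ in _ | _] = set0) ?cards0 //.
by apply/setP=> f; rewrite !inE; case: eqP => // ->; rewrite (negbTE ue).
Qed.

Lemma bdry_set1 e : e \subset Vx -> bdry Vx [set e] = e.
Proof.
move=> /subsetP eV; apply/setP=> u; rewrite !inE degS_set1.
by case ue: (u \in e); rewrite ?andbF // eV.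
Qed.

Lemma bdry_sub S : bdry Vx S \subset Vx.
Proof. by apply/subsetP=> u; rewrite inE => /andP[]. Qed.

Lemma bdry_set0 : bdry Vx set0 = set0.
Proof.
apply/setP=> u; rewrite !inE /degS.
by rewrite (_ : [set _ in _ | _] = set0) ?cards0 ?andbF //; apply/setP=> e; rewrite !inE.
Qed.

End Boundary.

Section WormStates.
Variables (T : finType) (Vx : {set T}) (E : {set {set T}}).
Implicit Types (S t : {set {set T}}).

Lemma in_Oworm S :
  (S \in Oworm Vx E) = (S \subset E) && ((#|bdry Vx S| == 0) || (#|bdry Vx S| == 2)).
Proof. by rewrite !inE; case: (S \subset E). Qed.

Lemma Omega0E S : (S \in Omega Vx E 0) = (S \subset E) && (bdry Vx S == set0).
Proof. by rewrite inE cards_eq0. Qed.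

Lemma Oworm_sub S : S \in Oworm Vx E -> S \subset E.
Proof. by rewrite in_Oworm => /andP[]. Qed.

Lemma Omega_sub S k : S \in Omega Vx E k -> S \subset E.
Proof. by rewrite inE => /andP[]. Qed.

Lemma Oworm_symd_Omega0 S t :
  S \in Oworm Vx E -> t \in Omega Vx E 0 -> symd S t \in Oworm Vx E.
Proof.
rewrite !in_Oworm Omega0E => /andP[SE bdS] /andP[tE /eqP bdt].
by rewrite symd_sub // bdry_symd bdt symd0.
Qed.

End WormStates.

Section CanonicalPath.
Variables (T : finType) (Vx : {set T}) (E : {set {set T}}).
Hypothesis E_sub : forall e, e \in E -> e \subset Vx.
Hypothesis E_card : forall e, e \in E -> #|e| = 2.
Implicit Types (S U s t : {set {set T}}).

Definition pick_edge S : {set T} :=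
  odflt (odflt set0 [pick e in S]) [pick e in S | ~~ [disjoint e & bdry Vx S]].

Definition peel S := S :\ pick_edge S.

Definition remaining U k := iter k peel U.

Definition canon_edge s t k := pick_edge (remaining (symd s t) k).

Definition canon_state s t k := symd t (remaining (symd s t) k).

Definition canon_path s t := [seq canon_state s t k | k <- iota 1 #|symd s t|].

Lemma pick_edge_in S : S != set0 -> pick_edge S \in S.
Proof.
case/set0Pn=> e eS; rewrite /pick_edge.
case: (pickP [pred f in S | ~~ [disjoint f & bdry Vx S]]) => [f /andP[] // | _] /=.
by case: pickP => [f // | /(_ e)]; rewrite eS.
Qed.

Lemma pick_edge_meets S : bdry Vx S != set0 -> ~~ [disjoint pick_edge S & bdry Vx S].
Proof.
case/set0Pn=> u uB; rewrite /pick_edge.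
case: (pickP [pred f in S | ~~ [disjoint f & bdry Vx S]]) => [e /andP[] // | noe].
have : 0 < degS S u by move: uB; rewrite inE => /andP[_]; case: degS.
rewrite /degS card_gt0 => /set0Pn [e]; rewrite inE => /andP[eS ue].
have := noe e; rewrite /= eS /= => /negbFE /pred0P /(_ u).
by rewrite /= ue uB.
Qed.

Lemma remainingS U k : remaining U k.+1 = peel (remaining U k).
Proof. exact: iterS. Qed.

Lemma remaining_mono U i j : i <= j -> remaining U j \subset remaining U i.
Proof.
move=> le_ij; rewrite -(subnKC le_ij); elim: (j - i) => [|d IH]; first by rewrite addn0.
by rewrite addnS remainingS (subset_trans _ IH) // subD1set.
Qed.

Lemma remaining_sub U k : remaining U k \subset U.
Proof. exact: (remaining_mono U (leq0n k)). Qed.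

Lemma card_remaining U k : k <= #|U| -> #|remaining U k| = #|U| - k.
Proof.
elim: k => [|k IH] le_k; first by rewrite subn0.
have neq0 : remaining U k != set0 by rewrite -card_gt0 IH ?subn_gt0 // ltnW.
rewrite remainingS /peel; have := cardsD1 (pick_edge (remaining U k)) (remaining U k).
by rewrite pick_edge_in // IH ?(ltnW le_k) // add1n subnS => ->.
Qed.

Lemma remaining_end U : remaining U #|U| = set0.
Proof. by apply/eqP; rewrite -cards_eq0 card_remaining // subnn. Qed.

Lemma remaining_neq0 U k : k < #|U| -> remaining U k != set0.
Proof. by move=> lt_k; rewrite -card_gt0 card_remaining ?subn_gt0 // ltnW. Qed.

Lemma pick_remaining_in U k : k < #|U| -> pick_edge (remaining U k) \in remaining U k.
Proof. by move/remaining_neq0/pick_edge_in. Qed.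

Lemma pick_remaining_inj U i j : i < #|U| -> j < #|U| ->
  pick_edge (remaining U i) = pick_edge (remaining U j) -> i = j.
Proof.
suff lt_neq k l : l < #|U| -> k < l ->
    pick_edge (remaining U k) != pick_edge (remaining U l).
  move=> lt_i lt_j eq_ij; case: (ltngtP i j) => // [/(lt_neq _ _ lt_j) | /(lt_neq _ _ lt_i)];
    by rewrite eq_ij eqxx.
move=> lt_l lt_kl; apply: contraNneq (_ : pick_edge (remaining U k) \notin remaining U k.+1).
  by move=> ->; apply: subsetP (remaining_mono U lt_kl) _ (pick_remaining_in lt_l).
by rewrite remainingS !inE eqxx.
Qed.

Lemma peel_toggle S : S != set0 -> peel S = toggle S (pick_edge S).
Proof. by move=> neq0; rewrite /toggle pick_edge_in. Qed.

(* Peeling an edge e that meets the boundary B turns it into B (+) e, of size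
   |B| + 2 - 2 |B :&: e|, which is again 0 or 2. *)
Lemma remaining_Oworm U k : U \in Oworm Vx E -> remaining U k \in Oworm Vx E.
Proof.
move=> UW; elim: k => [//|k IH]; rewrite remainingS.
set S := remaining U k in IH *; set e := pick_edge S.
have SE : S \subset E := Oworm_sub IH.
have [-> | neq0] := eqVneq S set0.
  by rewrite /peel set0D in_Oworm sub0set bdry_set0 cards0.
have eE : e \in E := subsetP SE _ (pick_edge_in neq0).
rewrite peel_toggle // toggleE in_Oworm symd_sub ?sub1set //= bdry_symd bdry_set1 ?E_sub //.
have := cards_symd (bdry Vx S) e; rewrite (E_card eE).
have le_bd : #|bdry Vx S :&: e| <= #|bdry Vx S| by apply/subset_leq_card/subsetIl.
have meet : #|bdry Vx S| = 2 -> 0 < #|bdry Vx S :&: e|.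
  move=> bd2; rewrite card_gt0 setI_eq0 disjoint_sym pick_edge_meets //.
  by rewrite -card_gt0 bd2.
by move: IH; rewrite in_Oworm SE /= -/e => /orP[] /eqP bd card_symd; apply/orP; lia.
Qed.

Lemma canon_state0 s t : canon_state s t 0 = s.
Proof. by rewrite /canon_state /= symdC symdK. Qed.

Lemma canon_state_end s t : canon_state s t #|symd s t| = t.
Proof. by rewrite /canon_state remaining_end symd0. Qed.

Lemma canon_stateS s t k : k < #|symd s t| ->
  canon_state s t k.+1 = toggle (canon_state s t k) (canon_edge s t k).
Proof.
move=> lt_k; rewrite !toggleE /canon_state remainingS peel_toggle ?remaining_neq0 //.
by rewrite toggleE symdA.
Qed.

Lemma canon_state_Oworm s t k : s \in Oworm Vx E -> t \in Omega Vx E 0 ->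
  canon_state s t k \in Oworm Vx E.
Proof.
move=> sW t0; rewrite /canon_state symdC Oworm_symd_Omega0 //.
by apply: remaining_Oworm; apply: Oworm_symd_Omega0.
Qed.

Lemma bdry_canon_state s t k : t \in Omega Vx E 0 ->
  bdry Vx (canon_state s t k) = bdry Vx (remaining (symd s t) k).
Proof. by rewrite Omega0E => /andP[_ /eqP bdt]; rewrite bdry_symd bdt symdC symd0. Qed.

Lemma canon_edge_meets s t k : t \in Omega Vx E 0 -> bdry Vx (canon_state s t k) != set0 ->
  ~~ [disjoint canon_edge s t k & bdry Vx (canon_state s t k)].
Proof. by move=> t0; rewrite bdry_canon_state //; apply: pick_edge_meets. Qed.

Lemma canon_edge_in s t k : s \subset E -> t \subset E -> k < #|symd s t| ->
  canon_edge s t k \in E.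
Proof.
move=> sE tE lt_k; apply: subsetP (symd_sub sE tE) _ _.
exact: subsetP (remaining_sub _ k) _ (pick_remaining_in lt_k).
Qed.

Lemma cons_canon_path s t :
  s :: canon_path s t = [seq canon_state s t k | k <- iota 0 #|symd s t|.+1].
Proof. by rewrite /= canon_state0. Qed.

Lemma canon_path_good s t : s \in Oworm Vx E -> t \in Omega Vx E 0 ->
  good_path Vx E s (canon_path s t) t.
Proof.
move=> sW t0; have sE := Oworm_sub sW; have tE := Omega_sub t0.
apply/and3P; split.
- rewrite -{1}(canon_state0 s t) path_map; apply/(pathP 0) => k.
  rewrite size_iota => lt_k.
  change (0 :: iota 1 _) with (iota 0 #|symd s t|.+1).
  have lt_k1 : k < #|symd s t|.+1 := ltnW lt_k.
  rewrite !nth_iota // add0n add1n; apply/existsP; exists (canon_edge s t k).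
  by rewrite canon_edge_in // canon_stateS // eqxx.
- by apply/allP => _ /mapP [k _ ->]; apply: canon_state_Oworm.
- rewrite -{1}(canon_state0 s t) last_map (last_nth 0) size_iota.
  change (0 :: iota 1 _) with (iota 0 #|symd s t|.+1).
  by rewrite nth_iota // add0n canon_state_end.
Qed.

Lemma canon_paths_ok : paths_ok Vx E (Omega Vx E 0) canon_path.
Proof. by move=> s t; apply: canon_path_good. Qed.

Lemma uses_canon_path s t z z' : uses canon_path s t z z' ->
  exists2 k, k < #|symd s t| & z = canon_state s t k /\ z' = canon_state s t k.+1.
Proof.
rewrite /uses cons_canon_path => /(nthP (z, z')) [k].
rewrite size_zip !size_map !size_iota (minn_idPr (leqnSn _)) => lt_k.
rewrite nth_zip_cond size_zip !size_map !size_iota (minn_idPr (leqnSn _)) lt_k.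
have lt_k1 : k < #|symd s t|.+1 := ltnW lt_k.
rewrite !(nth_map 0) ?size_iota // !nth_iota // add0n add1n.
by case=> <- <-; exists k.
Qed.

Lemma Lmax_canon_path : Lmax Vx E (Omega Vx E 0) canon_path <= #|E|.
Proof.
apply/bigmax_leqP => s sW; apply/bigmax_leqP => t t0.
by rewrite size_map size_iota subset_leq_card // symd_sub ?(Oworm_sub sW) ?(Omega_sub t0).
Qed.

End CanonicalPath.

Lemma congestion_constant_le L M N : L <= N -> 2 <= M ->
  L * M * (1 + M * M) * (2 * M.-1) <= M ^ 5 * N.
Proof.
move=> LN M2; have core : M * (1 + M * M) * (2 * M.-1) <= M ^ 5.
  by case: M M2 => [|[|M]] // _; rewrite !expnS expn0; nia.
by rewrite [M ^ 5 * N]mulnC; move: (leq_mul LN core); rewrite !mulnA.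
Qed.

Local Open Scope ring_scope.

Section Griffiths.
Variables (R : realFieldType) (T : finType) (Vx : {set T}) (E : {set {set T}})
  (x : {set T} -> R).
Hypothesis E_sub : forall e, e \in E -> e \subset Vx.
Hypothesis x_ge0 : forall e, e \in E -> 0 <= x e.
Hypothesis x_le1 : forall e, e \in E -> x e <= 1.

Definition Zbdry (W : {set T}) : R :=
  \sum_(S : {set {set T}} | (S \subset E) && (bdry Vx S == W)) wt x S.

Definition chi (s : {ffun T -> bool}) (A : {set T}) : R := \prod_(u in A) (-1) ^+ s u.

Definition xE (e : {set T}) : R := if e \in E then x e else 0.

Definition gen_fun (s : {ffun T -> bool}) : R := \prod_(e : {set T}) (1 + xE e * chi s e).

Lemma sum_bool_signX n : \sum_(b : bool) ((-1) ^+ b) ^+ n = if odd n then 0 else 2 :> R.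
Proof. by rewrite big_bool /= expr1 expr1n -signr_odd; case: odd; rewrite ?expr1 ?addNr. Qed.

Lemma chi_mul_prod s W (J : {set {set T}}) :
  chi s W * \prod_(e in J) chi s e =
  \prod_(u : T) ((-1) ^+ s u) ^+ ((u \in W) + degS J u)%N.
Proof.
rewrite /chi (exchange_big_dep predT) //= big_mkcond /= -big_split /=.
apply: eq_bigr => u _; rewrite exprD prodr_const /degS.
congr (_ * _ ^+ _); first by case: (u \in W); rewrite ?expr1 ?expr0.
by apply: eq_card => e; rewrite !inE.
Qed.

Lemma sum_chi_mul_prod W (J : {set {set T}}) :
  \sum_(s : {ffun T -> bool}) chi s W * \prod_(e in J) chi s e =
  if [set u | odd (degS J u)] == W then 2 ^+ #|T| else 0.
Proof.
under eq_bigr do rewrite chi_mul_prod.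
rewrite -(bigA_distr_bigA (fun (u : T) (b : bool) => ((-1) ^+ b) ^+ ((u \in W) + degS J u)%N)) /=.
under eq_bigr do rewrite sum_bool_signX.
case: eqP => [<-|neW].
  by rewrite -prodr_const; apply: eq_bigr => u _; rewrite oddD inE oddb addbb.
suff [u oddu] : exists u, odd ((u \in W) + degS J u) by rewrite (bigD1 u) //= oddu mul0r.
apply/existsP; apply: contraT; rewrite negb_exists => /forallP evenW.
case: neW; apply/setP=> u; have := evenW u; rewrite inE oddD oddb.
by case: (u \in W); case: odd.
Qed.

Lemma gen_funE s :
  gen_fun s = \sum_(J : {set {set T}}) (\prod_(e in J) xE e) * \prod_(e in J) chi s e.
Proof.
rewrite /gen_fun; under eq_bigr do rewrite addrC.
rewrite bigA_distr /=; apply: eq_bigr => J _.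
by rewrite -big_split /= [RHS]big_mkcond /=; apply: eq_bigr => e _; case: (e \in J).
Qed.

Lemma prod_xE (J : {set {set T}}) :
  \prod_(e in J) xE e = if J \subset E then wt x J else 0.
Proof.
case: (boolP (J \subset E)) => [/subsetP JE | /subsetPn [e eJ eNE]].
  by apply: eq_bigr => e /JE eE; rewrite /xE eE.
by rewrite (bigD1 e) //= /xE (negbTE eNE) mul0r.
Qed.

Lemma odd_degS_bdry (J : {set {set T}}) : J \subset E ->
  [set u | odd (degS J u)] = bdry Vx J.
Proof.
move=> /subsetP JE; apply/setP=> u; rewrite !inE.
case uV: (u \in Vx) => //=; rewrite /degS (_ : [set _ in _ | _] = set0) ?cards0 //.
apply/setP=> e; rewrite !inE; apply/negP => /andP[/JE /E_sub /subsetP eV /eV].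
by rewrite uV.
Qed.

Lemma sum_chi_gen_fun W :
  \sum_(s : {ffun T -> bool}) chi s W * gen_fun s = 2 ^+ #|T| * Zbdry W.
Proof.
under eq_bigr do rewrite gen_funE mulr_sumr.
rewrite exchange_big /=.
under eq_bigr => J _ do
  [under eq_bigr do rewrite mulrCA; rewrite -mulr_sumr sum_chi_mul_prod prod_xE].
rewrite /Zbdry mulr_sumr [RHS]big_mkcond /=; apply: eq_bigr => J _.
case: (boolP (J \subset E)) => JE /=; last by rewrite mul0r.
by rewrite odd_degS_bdry //; case: eqP; rewrite ?mulr0 // mulrC.
Qed.

Lemma norm_chi s A : `|chi s A| = 1.
Proof. by rewrite normr_prod; apply: big1 => u _; apply: normr_sign. Qed.

Lemma gen_fun_ge0 s : 0 <= gen_fun s.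
Proof.
apply: prodr_ge0 => e _.
suff : `|xE e * chi s e| <= 1 by rewrite ler_norml => /andP[? _]; lra.
rewrite normrM norm_chi mulr1 /xE; case: ifP => eE; last by rewrite normr0.
by rewrite ger0_norm ?x_ge0 ?x_le1.
Qed.

(* Griffiths' inequality: 2 ^+ #|T| * Zbdry W is the Fourier coefficient at W
   of the nonnegative function gen_fun, hence at most its total mass. *)
Lemma Zbdry_le_set0 W : Zbdry W <= Zbdry set0.
Proof.
have pos2 : (0 : R) < 2 ^+ #|T| by apply: exprn_gt0; lra.
rewrite -(ler_pM2l pos2) -!sum_chi_gen_fun.
apply: ler_sum => s _; rewrite {2}/chi big_set0 mul1r.
apply: le_trans (ler_norm _) _.
by rewrite normrM norm_chi mul1r ger0_norm ?gen_fun_ge0.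
Qed.

End Griffiths.

Lemma metropolis_term_ge (R : realFieldType) (du dv D r q : R) :
  1 <= du -> du <= D -> 1 <= dv -> dv <= D -> 0 <= q -> q <= 1 -> q <= r ->
  q / (4 * D) <= Num.min 1 (du / dv * r) / (4 * du).
Proof.
move=> du1 duD dv1 dvD q0 q1 qr.
have du0 : 0 < du by lra.
have D0 : 0 < D by lra.
have -> : q / (4 * D) = (q * du / D) / (4 * du) by field; rewrite !gt_eqF.
apply: ler_wpM2r; first by rewrite invr_ge0; lra.
rewrite le_min; apply/andP; split.
  by rewrite ler_pdivrMr //; apply: ler_pM => //; apply: ltW.
have invD : D^-1 <= dv^-1 by rewrite lef_pV2 ?posrE //; lra.
have -> : q * du / D = du * (D^-1 * q) by ring.
have -> : du / dv * r = du * (dv^-1 * r) by ring.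
rewrite ler_pM2l //; apply: ler_pM => //.
by rewrite invr_ge0 ltW.
Qed.

Section TransitionBound.
Variables (R : realFieldType) (T : finType) (Vx : {set T}) (E : {set {set T}})
  (x : {set T} -> R).
Hypothesis E_sub : forall e, e \in E -> e \subset Vx.
Hypothesis E_card : forall e, e \in E -> #|e| = 2%N.
Hypothesis x_ge0 : forall e, e \in E -> 0 <= x e.
Hypothesis x_le1 : forall e, e \in E -> x e <= 1.

Local Notation m := #|Vx|.
Local Notation D := ((m.-1)%:R : R).

Lemma card_Vx_ge2 e : e \in E -> (2 <= m)%N.
Proof. by move=> eE; rewrite -(E_card eE) subset_leq_card ?E_sub. Qed.

Lemma degE_gt0 u e : e \in E -> u \in e -> (0 < degE E u)%N.
Proof. by move=> eE ue; rewrite card_gt0; apply/set0Pn; exists e; rewrite inE eE. Qed.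

Lemma degE_le u : u \in Vx -> (degE E u <= m.-1)%N.
Proof.
move=> uV; have sub : [set e in E | u \in e] \subset [set [set u; v] | v in Vx :\ u].
  apply/subsetP=> e; rewrite inE => /andP[eE ue].
  have /cards2P [a [b [neq_ab def_e]]] : #|e| == 2%N by rewrite E_card.
  have aV : a \in Vx by rewrite (subsetP (E_sub eE)) // def_e !inE eqxx.
  have bV : b \in Vx by rewrite (subsetP (E_sub eE)) // def_e !inE eqxx orbT.
  move: ue; rewrite def_e !inE => /orP[] /eqP ->; apply/imsetP.
    by exists b; rewrite // !inE eq_sym neq_ab.
  by exists a; rewrite 1?setUC // !inE neq_ab.
apply: leq_trans (subset_leq_card sub) _; apply: leq_trans (leq_imset_card _ _) _.
by rewrite (cardsD1 u Vx) uV.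
Qed.

Lemma degE_bounds u e : e \in E -> u \in e -> (1 : R) <= (degE E u)%:R <= D.
Proof.
move=> eE ue; rewrite ler1n ler_nat (degE_gt0 eE ue) /=.
exact/degE_le/(subsetP (E_sub eE)).
Qed.

Lemma sum_inv_degE_ge e : e \in E -> D^-1 <= \sum_(u in e) ((degE E u)%:R)^-1.
Proof.
move=> eE; have /set0Pn [u ue] : e != set0 by rewrite -card_gt0 E_card.
rewrite (bigD1 u) //=; apply: ler_wpDr; first by apply: sumr_ge0 => v _; rewrite invr_ge0.
have /andP[d1 dD] := degE_bounds eE ue.
by rewrite lef_pV2 ?posrE //; lra.
Qed.

Lemma xpow_ge0 z e : e \in E -> 0 <= xpow x z e.
Proof. by rewrite /xpow; case: ifP => _ eE; [lra | apply: x_ge0]. Qed.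

Lemma xpow_le1 z e : e \in E -> xpow x z e <= 1.
Proof. by rewrite /xpow; case: ifP => _ eE; [lra | apply: x_le1]. Qed.

Lemma metropolis_sum_ge z e u : e \in E -> u \in e -> u \in bdry Vx z ->
  (e \in z -> 0 < x e) ->
  xpow x z e / (4 * D) <= \sum_(u0 in e | u0 \in bdry Vx z) \sum_(v in e :\ u0)
     Num.min 1 ((degE E u0)%:R / (degE E v)%:R * xratio x z e) / (4 * (degE E u0)%:R).
Proof.
move=> eE ue uB xpos.
have /set0Pn [v ve] : e :\ u != set0.
  by rewrite -card_gt0; have := cardsD1 u e; rewrite ue (E_card eE) add1n => -[<-].
have term_ge0 u0 v0 :
    0 <= Num.min 1 ((degE E u0)%:R / (degE E v0)%:R * xratio x z e) / (4 * (degE E u0)%:R).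
  apply: divr_ge0; last by rewrite mulr_ge0 ?ler0n.
  rewrite le_min ler01 mulr_ge0 ?divr_ge0 ?ler0n //.
  by rewrite /xratio; case: ifP => _; rewrite ?invr_ge0 x_ge0.
have qr : xpow x z e <= xratio x z e.
  rewrite /xpow /xratio; case: ifP => ez; last by [].
  by rewrite invf_ge1 ?xpos ?x_le1.
have /andP[du1 duD] := degE_bounds eE ue.
have /andP[dv1 dvD] : (1 : R) <= (degE E v)%:R <= D.
  by apply: degE_bounds eE _; move: ve; rewrite inE => /andP[].
apply: le_trans (metropolis_term_ge du1 duD dv1 dvD (xpow_ge0 z eE) (xpow_le1 z eE) qr) _.
rewrite (bigD1 u) ?ue //= (bigD1 v) //= -addrA ler_wpDr // addr_ge0 //.
  by apply: sumr_ge0 => v0 _; apply: term_ge0.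
by apply: sumr_ge0 => u0 _; apply: sumr_ge0 => v0 _; apply: term_ge0.
Qed.

Lemma Pedge_ge z e :
  z \in Oworm Vx E -> toggle z e \in Oworm Vx E -> e \in E ->
  (bdry Vx z != set0 -> ~~ [disjoint e & bdry Vx z]) -> (e \in z -> 0 < x e) ->
  xpow x z e / (2 * D) <= xi R Vx E z * Pedge Vx E x z e.
Proof.
move=> zW z'W eE meet xpos.
have D0 : 0 < D by rewrite ltr0n; have := card_Vx_ge2 eE; lia.
set q := xpow x z e; pose S := \sum_(u in e) ((degE E u)%:R : R)^-1.
have q0 : 0 <= q := xpow_ge0 z eE.
have qS : q / (2 * D) <= q * S / 2.
  rewrite (_ : q / (2 * D) = q * D^-1 / 2); last by field; rewrite gt_eqF.
  by rewrite ler_pM2r ?ler_wpM2l ?sum_inv_degE_ge //; lra.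
rewrite /Pedge /xi -/q -/S; case: ifP => z0.
  have m0 : (m%:R : R) != 0 by rewrite pnatr_eq0 -lt0n (leq_trans _ (card_Vx_ge2 eE)).
  by rewrite (_ : m%:R * _ = q * S / 2) //; field.
have z2 : z \in Omega Vx E 2 by move: zW; rewrite /Oworm inE z0.
rewrite z2; case: ifP => z'0.
  by rewrite (_ : 2 * (q / 4 * S) = q * S / 2) //; field.
have z'2 : toggle z e \in Omega Vx E 2 by move: z'W; rewrite /Oworm inE z'0.
rewrite z'2 /=.
have [u /andP[ue uB]] : exists u, (u \in e) && (u \in bdry Vx z).
  have : bdry Vx z != set0 by move: z2; rewrite inE -card_gt0 => /andP[_ /eqP ->].
  by move/meet; rewrite -setI_eq0 => /set0Pn [u]; rewrite inE; exists u.
rewrite (_ : q / (2 * D) = 2 * (q / (4 * D))); last by field; rewrite gt_eqF.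
by rewrite ler_pM2l ?(metropolis_sum_ge eE ue uB xpos) //; lra.
Qed.

End TransitionBound.

Section Weights.
Variables (R : realFieldType) (T : finType) (x : {set T} -> R).
Implicit Types (A B S s t : {set {set T}}).

Lemma wt_mulIU A B : wt x A * wt x B = wt x (A :&: B) * wt x (A :|: B).
Proof.
rewrite /wt (big_setID B) [X in _ = _ * X](big_setID B) /=.
by rewrite [(A :|: B) :&: B]setIC setKU setDUl setDv setU0; ring.
Qed.

(* For U \subset symd s t, the sets symd t U and symd s U have the same
   intersection and union as t and s. *)
Lemma wt_swap s t (U : {set {set T}}) : U \subset symd s t ->
  wt x s * wt x t = wt x (symd t U) * wt x (symd s U).
Proof.
move=> /subsetP sub; rewrite wt_mulIU [RHS]wt_mulIU.
by congr (wt x _ * wt x _); apply/setP=> y; have := sub y; rewrite !in_symd !inE;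
  case: (y \in U); case: (y \in s); case: (y \in t) => //= /(_ isT).
Qed.

Lemma wt_setU1 S e : wt x (S :|: [set e]) = wt x S * xpow x S e.
Proof.
rewrite /xpow; case: ifP => eS; first by rewrite mulr1 (setUidPl _) // sub1set.
by rewrite setUC /wt big_setU1 /= ?eS // mulrC.
Qed.

End Weights.

Section Congestion.
Variables (R : realFieldType) (T : finType) (Vx : {set T}) (E : {set {set T}})
  (x : {set T} -> R).
Hypothesis E_sub : forall e, e \in E -> e \subset Vx.
Hypothesis E_card : forall e, e \in E -> #|e| = 2%N.
Hypothesis x_ge0 : forall e, e \in E -> 0 <= x e.
Hypothesis x_le1 : forall e, e \in E -> x e <= 1.
Implicit Types (S s t z : {set {set T}}) (p : {set {set T}} * {set {set T}}).

Local Notation m := #|Vx|.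
Local Notation Zd := (m%:R * Zk Vx E x 0 + 2 * Zk Vx E x 2).

Lemma wt_ge0 S : S \subset E -> 0 <= wt x S.
Proof. by move=> /subsetP SE; apply: prodr_ge0 => e /SE; apply: x_ge0. Qed.

Lemma Zk_ge0 k : 0 <= Zk Vx E x k.
Proof. by apply: sumr_ge0 => S /Omega_sub; apply: wt_ge0. Qed.

Lemma Zk0_ge1 : 1 <= Zk Vx E x 0.
Proof.
have set0_Omega0 : set0 \in Omega Vx E 0 by rewrite Omega0E sub0set bdry_set0 eqxx.
rewrite /Zk (bigD1 set0) //= /wt big_set0 lerDl.
by apply: sumr_ge0 => S /andP[/Omega_sub SE _]; apply: wt_ge0.
Qed.

Lemma Zk0_Zbdry : Zk Vx E x 0 = Zbdry Vx E x set0.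
Proof. by apply: eq_bigl => S; rewrite Omega0E. Qed.

Lemma Zd_gt0 : (0 < m)%N -> 0 < Zd.
Proof.
move=> m0; have := Zk0_ge1; have := Zk_ge0 2.
have : (1 : R) <= m%:R by rewrite ler1n.
nra.
Qed.

Lemma xi_ge0 S : 0 <= xi R Vx E S.
Proof. by rewrite /xi; case: ifP => _; [rewrite ler0n | case: ifP => _; lra]. Qed.

Lemma xi_le S : S \in Oworm Vx E -> xi R Vx E S <= m%:R.
Proof.
rewrite /xi inE; case: ifP => //= _ S2; rewrite S2.
by move: S2; rewrite inE => /andP[_ /eqP <-]; rewrite ler_nat subset_leq_card ?bdry_sub.
Qed.

Lemma piw_ge0 S : 0 <= piw Vx E x S.
Proof.
rewrite /piw; have [SW | SnW] := boolP (S \in Oworm Vx E).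
  have SE := Oworm_sub SW.
  by rewrite divr_ge0 ?mulr_ge0 ?xi_ge0 ?wt_ge0 // addr_ge0 ?mulr_ge0 ?ler0n ?Zk_ge0.
by move: SnW; rewrite inE negb_or /xi => /andP[/negbTE -> /negbTE ->]; rewrite !mul0r.
Qed.

Lemma piw_Omega0 t : t \in Omega Vx E 0 -> piw Vx E x t = m%:R * wt x t / Zd.
Proof. by move=> t0; rewrite /piw /xi t0. Qed.

Lemma piset_Omega0 : piset Vx E x (Omega Vx E 0) = m%:R * Zk Vx E x 0 / Zd.
Proof. by rewrite /piset (eq_bigr _ piw_Omega0) -mulr_suml -mulr_sumr. Qed.

Lemma Pm_toggle z e : e \in E -> Pm Vx E x z (toggle z e) = Pedge Vx E x z e.
Proof.
move=> eE; have neq : z != toggle z e.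
  by apply/eqP => /setP/(_ e); rewrite toggleE in_symd inE eqxx addbT; case: (e \in z).
rewrite /Pm (negbTE neq) /Poff (big_pred1 e) // => f /=.
by apply/andP/eqP => [[_ /eqP/toggle_inj ->] | ->] //; rewrite eE eqxx.
Qed.

Definition through z z' p : bool :=
  (p.1 \in Oworm Vx E) && ((p.2 \in Omega Vx E 0) && uses (canon_path Vx) p.1 p.2 z z').

(* The Jerrum-Sinclair encoding of a pair routed through z -> toggle z e. *)
Definition flow_image z e p := symd (z :|: [set e]) (symd p.1 p.2).

Lemma through_step z z' p : through z z' p ->
  exists2 k, (k < #|symd p.1 p.2|)%N &
    z = canon_state Vx p.1 p.2 k /\ z' = toggle z (canon_edge Vx p.1 p.2 k).
Proof.
case/and3P=> _ _ /uses_canon_path [k lt_k [-> ->]].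
by exists k; rewrite // canon_stateS.
Qed.

Lemma through_toggle z e p : through z (toggle z e) p ->
  exists2 k, (k < #|symd p.1 p.2|)%N &
    z = canon_state Vx p.1 p.2 k /\ canon_edge Vx p.1 p.2 k = e.
Proof. by case/through_step=> k lt_k [def_z /toggle_inj def_e]; exists k. Qed.

Lemma wt_flow_image z e p : through z (toggle z e) p ->
  wt x p.1 * wt x p.2 = wt x (z :|: [set e]) * wt x (flow_image z e p).
Proof.
case/through_toggle=> k lt_k [def_z def_e]; set U := symd p.1 p.2.
suff [V subV def_y] : exists2 V : {set {set T}}, V \subset U & z :|: [set e] = symd p.2 V.
  rewrite (wt_swap x subV) /flow_image def_y; congr (_ * wt x _).
  by apply/setP=> w; rewrite !in_symd; case: (w \in V); case: (w \in p.1); case: (w \in p.2).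
have [ez | ez] := boolP (e \in z).
  by exists (remaining Vx U k); rewrite ?remaining_sub // (setUidPl _) ?sub1set.
exists (remaining Vx U k.+1); first exact: remaining_sub.
rewrite -/(canon_state Vx p.1 p.2 k.+1) canon_stateS // -def_z def_e.
by rewrite /toggle (negbTE ez) setUC.
Qed.

Lemma flow_image_inj z e :
  {in [set p | through z (toggle z e) p] &, injective (flow_image z e)}.
Proof.
move=> p1 p2; rewrite !inE => thr1 thr2 eq_img.
have eqU : symd p1.1 p1.2 = symd p2.1 p2.2.
  by move/(congr1 (symd (z :|: [set e]))): eq_img; rewrite !symdKl.
have [k1 lt1 [z1 e1]] := through_toggle thr1.
have [k2 lt2 [z2 e2]] := through_toggle thr2.
rewrite /canon_edge /canon_state eqU in lt1 e1 z1; rewrite /canon_edge /canon_state in e2 z2.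
have eqk : k1 = k2 by apply: (pick_remaining_inj (Vx := Vx) lt1 lt2); rewrite e1 e2.
have eq2 : p1.2 = p2.2.
  set V := remaining Vx (symd p2.1 p2.2) k2.
  rewrite eqk -/V in z1; rewrite -(symdK p1.2 V) -(symdK p2.2 V) -/V.
  by rewrite -z1 -z2.
have eq1 : p1.1 = p2.1 by rewrite -(symdK p1.1 p1.2) eqU eq2 symdK.
by move: eq1 eq2; case: p1 {thr1 eq_img eqU z1 e1 lt1} => ? ?;
  case: p2 {thr2 z2 e2 lt2} => ? ? /= -> ->.
Qed.

Lemma flow_image_bdry z e p : through z (toggle z e) p ->
  (flow_image z e p \subset E) &&
  (bdry Vx (flow_image z e p) \in
     [set symd (bdry Vx (z :|: [set e])) W | W in bdry Vx @: Oworm Vx E]).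
Proof.
move=> thr; case/and3P: (thr) => sW t0 _.
have sE := Oworm_sub sW; have tE := Omega_sub t0.
have [k lt_k [def_z def_e]] := through_toggle thr.
have zE : z \subset E by rewrite def_z; apply/Oworm_sub/canon_state_Oworm.
have eE : e \in E by rewrite -def_e canon_edge_in.
rewrite !symd_sub ?subUset ?zE ?sub1set //=.
move: t0; rewrite Omega0E => /andP[_ /eqP bdt].
by rewrite !bdry_symd bdt symd0; apply/imsetP; exists (bdry Vx p.1); rewrite ?imset_f.
Qed.

Lemma card_bdry_Oworm : (#|bdry Vx @: Oworm Vx E| <= 1 + m * m)%N.
Proof.
have sub : bdry Vx @: Oworm Vx E \subset set0 |: [set [set u.1; u.2] | u in setX Vx Vx].
  apply/subsetP=> _ /imsetP [S SW ->]; rewrite !inE.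
  move: SW; rewrite in_Oworm => /andP[_ /orP[/eqP/cards0_eq -> | /cards2P [a [b [_ def_b]]]]].
    by rewrite eqxx.
  apply/orP; right; apply/imsetP; exists (a, b); last by rewrite def_b.
  by rewrite !inE /= !(subsetP (bdry_sub Vx S)) // def_b !inE eqxx ?orbT.
apply: leq_trans (subset_leq_card sub) _; rewrite cardsU1 leq_add ?leq_b1 //.
by apply: leq_trans (leq_imset_card _ _) _; rewrite cardsX.
Qed.

Lemma sum_wt_bdry_in (B : {set {set T}}) :
  \sum_(S : {set {set T}} | (S \subset E) && (bdry Vx S \in B)) wt x S
    <= #|B|%:R * Zk Vx E x 0.
Proof.
rewrite (partition_big (bdry Vx) (mem B)) /=; last by move=> S /andP[].
apply: le_trans (_ : \sum_(W in B) Zbdry Vx E x set0 <= _); last first.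
  by rewrite sumr_const Zk0_Zbdry mulr_natl.
apply: ler_sum => W WB; apply: le_trans (Zbdry_le_set0 E_sub x_ge0 x_le1 W).
rewrite le_eqVlt; apply/orP; left; apply/eqP/eq_bigl => S.
by case: eqP => [->|]; rewrite ?WB ?andbT ?andbF.
Qed.

Lemma piw_through_le z e p : e \in E -> through z (toggle z e) p ->
  piw Vx E x p.1 * piw Vx E x p.2 <=
  m%:R * m%:R * wt x (z :|: [set e]) / (Zd * Zd) * wt x (flow_image z e p).
Proof.
move=> eE thr; case/and3P: (thr) => sW t0 _.
have Zd0 : 0 < Zd by apply/Zd_gt0/ltnW/(card_Vx_ge2 E_sub E_card eE).
have -> : piw Vx E x p.1 * piw Vx E x p.2 =
    xi R Vx E p.1 * (m%:R * (wt x p.1 * wt x p.2) / (Zd * Zd)).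
  by rewrite (piw_Omega0 t0) /piw; field; rewrite gt_eqF.
rewrite (_ : m%:R * m%:R * wt x (z :|: [set e]) / (Zd * Zd) * wt x (flow_image z e p) =
    m%:R * (m%:R * (wt x p.1 * wt x p.2) / (Zd * Zd))); last first.
  by rewrite (wt_flow_image thr); field; rewrite gt_eqF.
apply: ler_wpM2r (xi_le sW).
by rewrite divr_ge0 ?mulr_ge0 ?ler0n ?wt_ge0 ?(Oworm_sub sW) ?(Omega_sub t0) // ltW.
Qed.

Lemma flow_le z e : z \in Oworm Vx E -> e \in E ->
  \sum_(p | through z (toggle z e) p) piw Vx E x p.1 * piw Vx E x p.2 <=
  m%:R * m%:R * wt x (z :|: [set e]) / (Zd * Zd) * ((1 + m * m)%N%:R * Zk Vx E x 0).
Proof.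
move=> zW eE; set y := z :|: [set e]; set K := m%:R * m%:R * wt x y / (Zd * Zd).
have Zd0 : 0 < Zd by apply/Zd_gt0/ltnW/(card_Vx_ge2 E_sub E_card eE).
have yE : y \subset E by rewrite subUset sub1set eE (Oworm_sub zW).
have K0 : 0 <= K by rewrite divr_ge0 ?mulr_ge0 ?ler0n ?wt_ge0 // ltW.
apply: le_trans (_ : \sum_(p | through z (toggle z e) p) K * wt x (flow_image z e p) <= _).
  by apply: ler_sum => p; apply: piw_through_le.
rewrite -mulr_sumr ler_wpM2l //.
rewrite (eq_bigl (mem [set p | through z (toggle z e) p])); last by move=> p; rewrite /= inE.
rewrite -(big_imset _ (@flow_image_inj z e)) /=.
set Bs := [set symd (bdry Vx y) W | W in bdry Vx @: Oworm Vx E].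
apply: le_trans
  (_ : \sum_(S : {set {set T}} | (S \subset E) && (bdry Vx S \in Bs)) wt x S <= _).
  rewrite [X in X <= _]big_mkcond [X in _ <= X]big_mkcond /=; apply: ler_sum => S _.
  case: ifP => [/imsetP [p] | _]; first by rewrite inE => thr ->; rewrite flow_image_bdry.
  by case: ifP => // /andP[SE _]; apply: wt_ge0.
apply: le_trans (sum_wt_bdry_in _) _; apply: ler_wpM2r; first exact: Zk_ge0.
by rewrite ler_nat (leq_trans (leq_imset_card _ _) card_bdry_Oworm).
Qed.

Lemma x_gt0_of_wt z e : z \subset E -> wt x z != 0 -> e \in z -> 0 < x e.
Proof.
move=> /subsetP zE wz_neq0 ez; rewrite lt_def x_ge0 ?zE // andbT.
by apply: contra_neq wz_neq0 => xe0; rewrite /wt (bigD1 e ez) /= xe0 mul0r.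
Qed.

Lemma edge_congestion_le z e :
  z \in Oworm Vx E -> toggle z e \in Oworm Vx E -> e \in E ->
  (bdry Vx z != set0 -> ~~ [disjoint e & bdry Vx z]) ->
  (Lmax Vx E (Omega Vx E 0) (canon_path Vx))%:R *
    (m%:R * m%:R * wt x (z :|: [set e]) / (Zd * Zd) * ((1 + m * m)%N%:R * Zk Vx E x 0))
  <= (m ^ 5 * #|E|)%N%:R * (piset Vx E x (Omega Vx E 0) * piw Vx E x z * Pedge Vx E x z e).
Proof.
move=> zW z'W eE meet; have m2 := card_Vx_ge2 E_sub E_card eE.
have Zd0 : 0 < Zd by apply/Zd_gt0/ltnW.
set L := Lmax _ _ _ _; set b := (m ^ 5 * #|E|)%N%:R.
rewrite piset_Omega0 /piw wt_setU1; set q := xpow x z e.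
set Kc := m%:R * wt x z * Zk Vx E x 0 / (Zd * Zd).
rewrite (_ : L%:R * _ = L%:R * m%:R * (1 + m * m)%N%:R * q * Kc); last first.
  by rewrite /Kc; field; rewrite gt_eqF.
rewrite (_ : b * _ = b * (xi R Vx E z * Pedge Vx E x z e) * Kc); last first.
  by rewrite /Kc; field; rewrite gt_eqF.
have [wz0 | wz_neq0] := eqVneq (wt x z) 0; first by rewrite /Kc wz0 !(mulr0, mul0r).
have Kc0 : 0 < Kc.
  have wz0 : 0 < wt x z by rewrite lt_def wz_neq0 wt_ge0 ?(Oworm_sub zW).
  by rewrite divr_gt0 ?mulr_gt0 ?ltr0n ?(lt_le_trans ltr01 Zk0_ge1) // ltnW.
have Pge := Pedge_ge E_sub E_card x_ge0 x_le1 zW z'W eE meet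
  (x_gt0_of_wt (Oworm_sub zW) wz_neq0).
rewrite ler_pM2r //; apply: le_trans (ler_wpM2l (ler0n _ _) Pge).
rewrite mulrCA [X in _ <= X]mulrC; apply: ler_wpM2r; first exact: (xpow_ge0 x_ge0 z eE).
have D0 : 0 < (m.-1)%:R :> R by rewrite ltr0n -subn1 subn_gt0.
rewrite ler_pdivlMr ?mulr_gt0 // -!natrM ler_nat.
exact: congestion_constant_le (Lmax_canon_path Vx E) m2.
Qed.

Lemma canon_path_congestion :
  congestion_le Vx E x (Omega Vx E 0) (canon_path Vx) ((m ^ 5 * #|E|)%N%:R).
Proof.
move=> z z' zW z'W Pz; rewrite pair_big_dep /=.
have [p thr | no_path] := pickP (through z z'); last first.
  rewrite big_pred0 // mulr0 mulr_ge0 ?ler0n // mulr_ge0 ?(ltW Pz) // mulr_ge0 ?piw_ge0 //.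
  by apply: sumr_ge0 => S _; apply: piw_ge0.
have [k lt_k [def_z def_z']] := through_step thr; case/and3P: thr => sW t0 _.
set e := canon_edge Vx p.1 p.2 k in def_z'; subst z'.
have eE : e \in E by rewrite canon_edge_in ?(Oworm_sub sW) ?(Omega_sub t0).
rewrite Pm_toggle //; apply: le_trans (ler_wpM2l (ler0n _ _) (flow_le zW eE)) _.
by apply: edge_congestion_le => //; rewrite def_z; apply: canon_edge_meets t0.
Qed.

End Congestion.


Lemma frac_pred_succ_bounds (R : realFieldType) (b : R) :
  1 <= b -> 0 <= (b - 1) / (b + 1) <= 1.
Proof.
move=> b1; have b0 : 0 < b + 1 by lra.
by rewrite divr_ge0 ?subr_ge0 ?(ltW b0) //= ler_pdivrMr // mul1r; lra.
Qed.

Lemma fstar_neq0 (R : nzRingType) (beta : R) a b c d :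
  fstar beta a b c d != 0 -> (a != d) && (b != c).
Proof. by rewrite /fstar; case: a; case: b; case: c; case: d; rewrite ?eqxx. Qed.

Lemma ord4_cases (i : 'I_4) : [\/ i = slot1, i = slot2, i = slot3 | i = slot4].
Proof.
case: i => [[|[|[|[|n]]]] lt_i] //;
  [constructor 1|constructor 2|constructor 3|constructor 4]; exact: val_inj.
Qed.

Section CircuitGraph.
Variables (V : finType) (opp : hedge V -> hedge V).

Lemma EC_edge e : e \in EC opp ->
  exists C C', [/\ C \in Circ opp, C' \in Circ opp, C != C' & e = [set C; C']].
Proof.
rewrite inE => /existsP [C /andP[CC /existsP [C' /andP[CC' /andP[/existsP [v cross] /eqP]]]]].
by move=> ->; exists C, C'; split => //; case/and5P: cross.
Qed.

Lemma EC_sub e : e \in EC opp -> e \subset Circ opp.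
Proof.
by case/EC_edge=> C [C' [CC CC' _ ->]]; apply/subsetP=> D; rewrite !inE => /orP[] /eqP ->.
Qed.

Lemma EC_card e : e \in EC opp -> #|e| = 2%N.
Proof. by case/EC_edge=> C [C' [_ _ neqC ->]]; rewrite cards2 neqC. Qed.

End CircuitGraph.

Section Gauge.
Variables (R : realFieldType) (V : finType) (opp : hedge V -> hedge V) (beta : R)
  (ref ref' : {set hedge V} -> hedge V) (X : {set hedge V} -> bool).
Hypothesis beta_gt1 : 1 < beta.
Hypothesis X_solves : forall u v,
  u \in Circ opp -> v \in Circ opp -> [set u; v] \in EC opp ->
  X u (+) X v = (Acnt beta opp ref [set u; v] < Dcnt beta opp ref [set u; v])%N.
Hypothesis ref'_def : forall C, C \in Circ opp ->
  if X C then ref' C \in [:: opp (ref C); partner (ref C)] else ref' C == ref C.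
Implicit Types (sigma : {ffun hedge V -> bool}) (C : {set hedge V}) (v : V).

Lemma sigma_opp sigma h : valid_sigma beta opp sigma -> sigma (opp h) = ~~ sigma h.
Proof. by case/andP=> /forallP/(_ h)/eqP. Qed.

Lemma sigma_partner sigma h : valid_sigma beta opp sigma -> sigma (partner h) = ~~ sigma h.
Proof.
case/andP=> _ /forallP/(_ h.1)/fstar_neq0 /andP[/negPf n14 /negPf n23].
have r1 : rev_ord slot1 = slot4 by apply: val_inj.
have r2 : rev_ord slot2 = slot3 by apply: val_inj.
have r3 : rev_ord slot3 = slot2 by apply: val_inj.
have r4 : rev_ord slot4 = slot1 by apply: val_inj.
case: h n14 n23 => v i /=; rewrite /partner /=.
by case: (ord4_cases i) => ->; rewrite ?r1 ?r2 ?r3 ?r4;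
  case: (sigma (v, slot1)); case: (sigma (v, slot2)); case: (sigma (v, slot3));
  case: (sigma (v, slot4)).
Qed.

Lemma sigma_ref' sigma C : C \in Circ opp -> valid_sigma beta opp sigma ->
  sigma (ref' C) = sigma (ref C) (+) X C.
Proof.
move=> CC valid; have := ref'_def CC; case: (X C); last by move/eqP ->; rewrite addbF.
by rewrite !inE => /orP[] /eqP ->; rewrite ?sigma_opp ?sigma_partner // addbT.
Qed.

(* agree (b = false) and disagree (b = true) as one relation, so that moving
   reference half-edges only changes b. *)
Definition parity_rel (r : {set hedge V} -> hedge V) (b : bool) v C (C' : {set hedge V})
  : bool :=
  crossing v C C' && [forall sigma, valid_sigma beta opp sigma ==>
     ((vweight beta sigma v == beta) == (sigma (r C) == sigma (r C')) (+) b)].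

Definition parity_cnt (r : {set hedge V} -> hedge V) (b : bool) (e : {set {set hedge V}})
  : nat :=
  #|[set v : V | [exists C in e, exists C' in e, parity_rel r b v C C']]|.

Lemma AcntE r e : Acnt beta opp r e = parity_cnt r false e.
Proof.
apply: eq_card => v; rewrite !inE; apply: eq_existsb => C; congr (_ && _).
apply: eq_existsb => C'; congr (_ && (_ && _)).
by apply: eq_forallb => sigma; rewrite addbF.
Qed.

Lemma DcntE r e : Dcnt beta opp r e = parity_cnt r true e.
Proof.
apply: eq_card => v; rewrite !inE; apply: eq_existsb => C; congr (_ && _).
apply: eq_existsb => C'; congr (_ && (_ && _)).
by apply: eq_forallb => sigma; rewrite addbT.
Qed.

Lemma parity_rel_ref' b v C (C' : {set hedge V}) : C \in Circ opp -> C' \in Circ opp ->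
  parity_rel ref' b v C C' = parity_rel ref (b (+) X C (+) X C') v C C'.
Proof.
move=> CC CC'; congr (_ && _); apply: eq_forallb => sigma.
case valid: (valid_sigma beta opp sigma) => //=; rewrite !sigma_ref' //.
by case: (sigma (ref C)); case: (sigma (ref C')); case: (X C); case: (X C'); case: b.
Qed.

Lemma parity_cnt_ref' b u w : u \in Circ opp -> w \in Circ opp ->
  parity_cnt ref' b [set u; w] = parity_cnt ref (b (+) X u (+) X w) [set u; w].
Proof.
move=> uC wC; apply: eq_card => v; rewrite !inE.
apply: eq_existsb => C; case CE: (C \in [set u; w]) => //=.
apply: eq_existsb => C'; case CE': (C' \in [set u; w]) => //=.
have [-> | neqC] := eqVneq C C'; first by rewrite /parity_rel /crossing eqxx.
move: CE CE' neqC; rewrite !inE => /orP[] /eqP -> /orP[] /eqP ->; rewrite ?eqxx // => _;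
  by rewrite parity_rel_ref' //; case: (X u); case: (X w); case: b.
Qed.

Lemma Dcnt_le_Acnt_ref' e : e \in EC opp -> (Dcnt beta opp ref' e <= Acnt beta opp ref' e)%N.
Proof.
move=> eE; case/EC_edge: (eE) => u [w [uC wC _ def_e]].
have := X_solves uC wC; rewrite -def_e AcntE DcntE => /(_ eE) sol.
rewrite AcntE DcntE def_e !parity_cnt_ref' // -!addbA -def_e sol.
by case: ltnP => [/ltnW|].
Qed.

Lemma xweight_ref'_bounds e : e \in EC opp -> 0 <= xweight beta opp ref' e <= 1.
Proof.
move=> eE; apply: frac_pred_succ_bounds.
by rewrite subzn ?Dcnt_le_Acnt_ref' // -exprnP exprn_ege1 // ltW.
Qed.

End Gauge.

Unset Implicit Arguments.
Set Strict Implicit.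

Theorem lemma6 (R : realFieldType) (V : finType) (opp : hedge V -> hedge V)
  (beta : R) (ref ref' : {set hedge V} -> hedge V) (X : {set hedge V} -> bool) :
  1 < beta ->
  involutive opp -> no_loops opp -> simple_graph opp -> connected_graph opp ->
  (* reference half-edges h_i in C_i *)
  (forall C, C \in Circ opp -> ref C \in C) ->
  (* X solves X_u (+) X_v = I(A(u,v) < D(u,v)) over GF(2) on E_C *)
  (forall u v, u \in Circ opp -> v \in Circ opp -> [set u; v] \in EC opp ->
     X u (+) X v = (Acnt beta opp ref [set u; v] < Dcnt beta opp ref [set u; v])%N) ->
  (* new reference half-edges: an adjacent half-edge of C_i when X_i = 1 *)
  (forall C, C \in Circ opp ->
     if X C then ref' C \in [:: opp (ref C); partner (ref C)] else ref' C == ref C) ->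
  exists Gam : {set {set {set hedge V}}} -> {set {set {set hedge V}}} ->
               seq {set {set {set hedge V}}},
    paths_ok (Circ opp) (EC opp) (Omega (Circ opp) (EC opp) 0) Gam /\
    congestion_le (Circ opp) (EC opp) (xweight beta opp ref')
      (Omega (Circ opp) (EC opp) 0) Gam
      ((#|Circ opp| ^ 5 * #|EC opp|)%N%:R).
Proof.
(* Only 0 <= x_e <= 1 matters. *)
move=> beta1 _ _ _ _ _ X_solves ref'_def.
have x_bounds := xweight_ref'_bounds beta1 X_solves ref'_def.
have [EC_sub' EC_card'] := (@EC_sub _ opp, @EC_card _ opp).
exists (canon_path (Circ opp)); split; first exact: canon_paths_ok.
by apply: canon_path_congestion => // e /x_bounds /andP[].
Qed.
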